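(* For every $n\ge0$, the number of restricted ascent sequences of length $n$ equals the $n$-th Catalan number $C_n=\frac{1}{n+1}\binom{2n}{n}$.
   Context: For a sequence $(y_1,\dots,y_k)$ of integers, $\mathrm{asc}(y_1,\dots,y_k)=|\{1\le j<k: y_j<y_{j+1}\}|$. A restricted ascent sequence of length $n$ is a sequence $(x_1,\dots,x_n)$ of nonnegative integers with $x_1=0$ and, for all $2\le i\le n$, $m-1\le x_i\le 1+\mathrm{asc}(x_1,\dots,x_{i-1})$, where $m=\max(x_1,\dots,x_{i-1})$. The empty sequence is the unique restricted ascent sequence of length $0$. *)

From mathcomp Require Import all_boot.
Set Implicit Arguments. Unset Strict Implicit. Unset Printing Implicit Defensive.

Fixpoint asc (s : seq nat) : nat :=
  match s with
  | x :: ((y :: _) as t) => (x < y) + asc t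
  | _ => 0
  end.

Definition ras_step (p : seq nat) (x : nat) : bool :=
  ((\max_(y <- p) y).-1 <= x) && (x <= (asc p).+1).

Definition is_ras (s : seq nat) : bool :=
  match s with
  | [::] => true
  | x1 :: _ => (x1 == 0) &&
      [forall i : 'I_(size s), (1 <= i) ==> ras_step (take i s) (nth 0 s i)]
  end.

Definition catalan (n : nat) : nat := 'C(n.*2, n) %/ n.+1.

(* The admissible
   next entries of a prefix depend only on its maximum m, its number of
   ascents a and its last entry l, and every reachable prefix is either a
   "down" state (l = m - 1, truncated, which includes the initial prefix 0)
   or an "up" state (l = m > 0).  Let b_k be the ballot numbers, b_0 = 1 and
   b_(k+1)(z) = b_k(0) + ... + b_k(z+1), and let L_k be the linear functional
   on integer polynomials sending X^i to b_k(i).  With T = 1 - X + X^2, the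
   number of ways to extend a prefix by k entries is L_k(T^(a-(m-1))) in a
   down state and L_k(T^(a-m) X) in an up state: since b_(k+1) is a shifted
   partial sum of b_k, checking the recurrence of the extension tree reduces
   to the telescoping identity sum_(j<n) T^j X (X - 1) = T^n - 1.  The
   initial prefix 0 thus has L_k(1) = b_k(0) extensions, which is the
   Catalan number C_(k+1) by the closed form of the ballot numbers. *)

From HB Require Import structures.
From mathcomp Require Import all_boot all_algebra zify ring.

Definition ras_max (p : seq nat) : nat := \max_(y <- p) y.

Definition ras_choices (p : seq nat) : seq nat :=
  iota (ras_max p).-1 ((asc p).+2 - (ras_max p).-1).

Fixpoint ras_ext (p : seq nat) (k : nat) : seq (seq nat) :=
  if k is k'.+1 then flatten [seq ras_ext (rcons p x) k' | x <- ras_choices p]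
  else [:: p].

Lemma mem_ras_choices p x : (x \in ras_choices p) = ras_step p x.
Proof. by rewrite mem_iota /ras_step /ras_max; lia. Qed.

Lemma mem_ras_ext p k s :
  (s \in ras_ext p k) = [&& size s == size p + k, take (size p) s == p &
    all (fun i => ras_step (take i s) (nth 0 s i)) (iota (size p) k)].
Proof.
elim: k p => [|k IH] p /=.
  rewrite inE addn0 andbT; apply/eqP/andP => [->|[/eqP size_s /eqP <-]].
    by rewrite take_size.
  by rewrite -size_s take_size.
apply/flatten_mapP/and3P => [[x x_choice]|].
  rewrite IH size_rcons => /and3P[/eqP size_s /eqP prefix_s steps].
  have lt_ps : size p < size s by rewrite size_s; lia.
  move: prefix_s; rewrite (take_nth 0) // => /eqP.
  rewrite eqseq_rcons => /andP[/eqP prefix_s /eqP nth_s].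
  rewrite size_s prefix_s nth_s -mem_ras_choices x_choice steps.
  by split => //; apply/eqP; lia.
move=> [/eqP size_s /eqP prefix_s /andP[step_p steps]].
have lt_ps : size p < size s by rewrite size_s; lia.
exists (nth 0 s (size p)); first by rewrite mem_ras_choices -{1}prefix_s.
rewrite IH size_rcons size_s (take_nth 0) // prefix_s eqxx steps andbT; apply/eqP; lia.
Qed.

Lemma ras_ext_prefix p k s : s \in ras_ext p k -> take (size p) s = p.
Proof. by rewrite mem_ras_ext => /and3P[_ /eqP]. Qed.

Lemma uniq_ras_ext p k : uniq (ras_ext p k).
Proof.
elim: k p => [|k IH] p //=.
have : uniq (ras_choices p) by apply: iota_uniq.
elim: (ras_choices p) => [|x xs IHx] //= /andP[x_notin uniq_xs].
rewrite cat_uniq IH IHx // andbT /=.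
apply/hasPn => s /flatten_mapP[y y_in s_y]; apply/negP => s_x.
have := ras_ext_prefix _ _ _ s_x.
rewrite !size_rcons -(size_rcons p y) (ras_ext_prefix _ _ _ s_y).
by move/rcons_inj => [y_x]; rewrite -y_x y_in in x_notin.
Qed.

Lemma forall_pos_ord_iota (P : pred nat) m :
  [forall i : 'I_m.+1, (0 < i) ==> P i] = all P (iota 1 m).
Proof.
apply/forallP/allP => [step x | step i].
  rewrite mem_iota => /andP[x_gt0 x_lt].
  by have := step (Ordinal (x_lt : x < m.+1)); rewrite /= x_gt0.
by apply/implyP => i_gt0; apply: step; rewrite mem_iota i_gt0 add1n ltn_ord.
Qed.

Lemma is_ras_cons x t : is_ras (x :: t) = (x == 0) &&
  all (fun i => ras_step (take i (x :: t)) (nth 0 (x :: t) i)) (iota 1 (size t)).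
Proof. by rewrite /= -forall_pos_ord_iota. Qed.

Lemma mem_ras_ext0 n s : (s \in ras_ext [:: 0] n) = is_ras s && (size s == n.+1).
Proof.
rewrite mem_ras_ext; case: s => [//|x t]; rewrite is_ras_cons /= take0 eqseq_cons andbT.
by rewrite add1n !eqSS; case: eqP => [->|_]; rewrite ?andbT ?andbF.
Qed.

Lemma asc_rcons y q x : asc (rcons (y :: q) x) = asc (y :: q) + (last y q < x).
Proof.
elim: q y => [|z q IH] y /=; first by rewrite addn0.
by have /= -> := IH z; rewrite addnA.
Qed.

Lemma ras_max_rcons p x : ras_max (rcons p x) = maxn (ras_max p) x.
Proof. by rewrite /ras_max -cats1 big_cat big_seq1. Qed.

Fixpoint ras_count (k m a l : nat) : nat :=
  if k is k'.+1 then
    \sum_(x <- iota m.-1 (a.+2 - m.-1)) ras_count k' (maxn m x) (a + (l < x)) x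
  else 1.

Lemma iotaS m n : iota m n.+1 = m :: iota m.+1 n.
Proof. by []. Qed.

Lemma ras_countS k m a l : ras_count k.+1 m a l =
  \sum_(x <- iota m.-1 (a.+2 - m.-1)) ras_count k (maxn m x) (a + (l < x)) x.
Proof. by []. Qed.

Lemma size_ras_ext k y q :
  size (ras_ext (y :: q) k) = ras_count k (ras_max (y :: q)) (asc (y :: q)) (last y q).
Proof.
elim: k y q => [|k IH] y q //=.
rewrite size_flatten /shape -map_comp sumnE big_map; apply: eq_bigr => x _.
by rewrite /= IH -rcons_cons asc_rcons last_rcons ras_max_rcons.
Qed.

Import GRing.Theory.
Local Open Scope ring_scope.

Section Umbral.

Context {R : comNzRingType}.
Implicit Types (u v : nat -> R) (p : {poly R}).

Definition umbral u p : R := \sum_(i < size p) p`_i * u i.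

Lemma umbral_widen u p n :
  (size p <= n)%N -> umbral u p = \sum_(i < n) p`_i * u i.
Proof.
move=> le_pn; rewrite /umbral (big_ord_widen n (fun i => p`_i * u i)) // big_mkcond.
apply: eq_bigr => i _; case: ltnP => // le_pi.
by rewrite nth_default ?mul0r.
Qed.

Lemma umbralB u : {morph umbral u : p q / p - q}.
Proof.
move=> p q; pose n := maxn (size p) (size q).
rewrite !(umbral_widen u _ n) ?leq_maxl ?leq_maxr //; last first.
  by rewrite (leq_trans (size_polyD _ _)) // size_polyN.
by rewrite -sumrB; apply: eq_bigr => i _; rewrite coefB mulrBl.
Qed.

Lemma umbral_mulX u p : umbral u (p * 'X) = umbral (fun i => u i.+1) p.
Proof.
rewrite (umbral_widen u _ (size p).+1); last first.
  by rewrite (leq_trans (size_polyMleq _ _)) // size_polyX addn2.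
by rewrite big_ord_recl coefMX mul0r add0r; apply: eq_bigr => i _; rewrite coefMX.
Qed.

Lemma umbral1 u : umbral u 1 = u 0%N.
Proof. by rewrite /umbral size_poly1 big_ord1 coefC mul1r. Qed.

Lemma umbral_const1 p : umbral (fun=> 1) p = p.[1].
Proof. by rewrite horner_coef; apply: eq_bigr => i _; rewrite expr1n. Qed.

Lemma umbral_sub u v p : umbral (fun i => u i - v i) p = umbral u p - umbral v p.
Proof. by rewrite -sumrB; apply: eq_bigr => i _; rewrite mulrBr. Qed.

Lemma eq_umbral u v p : u =1 v -> umbral u p = umbral v p.
Proof. by move=> eq_uv; apply: eq_bigr => i _; rewrite eq_uv. Qed.

End Umbral.

HB.instance Definition _ (R : comNzRingType) (u : nat -> R) :=
  GRing.isZmodMorphism.Build _ _ (umbral u) (umbralB u).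

Definition trinomial (R : comNzRingType) : {poly R} := 1 - 'X + 'X^2.
Local Notation T := (trinomial _).

Lemma trinomial_at1 (R : comNzRingType) : (trinomial R).[1] = 1.
Proof. by rewrite /trinomial !hornerE; ring. Qed.

Lemma sum_trinomial_pow (R : comNzRingType) n :
  \sum_(j < n) T ^+ j * ('X * ('X - 1)) = T ^+ n - 1 :> {poly R}.
Proof.
rewrite -(expr0 T) -(telescope_sumr (fun j => T ^+ j)) // big_mkord.
by apply: eq_bigr => j _; rewrite [T ^+ j.+1]exprS /trinomial; ring.
Qed.

Section UmbralRecurrence.

Context {R : comNzRingType} {u g h : nat -> R}.
Hypothesis u0 : u 0%N = 0.
Hypothesis g_diff : forall i, g i = u i.+1 - u i.
Hypothesis h_shift : forall i, h i = u i.+2.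

Lemma umbral_diff p : umbral g p = umbral u (p * ('X - 1)).
Proof.
rewrite mulrBr mulr1 raddfB /= umbral_mulX -umbral_sub.
exact: eq_umbral.
Qed.

Lemma umbral_shift2 p : umbral h p = umbral u (p * 'X^2).
Proof. by rewrite exprS mulrA !umbral_mulX; apply: eq_umbral. Qed.

Lemma umbral_sum_trinomialX n :
  \sum_(j < n) umbral g (T ^+ j * 'X) = umbral u (T ^+ n) - u 0%N.
Proof.
rewrite -umbral1 -raddfB -sum_trinomial_pow raddf_sum; apply: eq_bigr => j _.
by rewrite umbral_diff mulrA.
Qed.

Lemma umbral_down_step c :
  umbral h (T ^+ c) = umbral g (T ^+ c) + \sum_(j < c.+1) umbral g (T ^+ j * 'X).
Proof.
rewrite umbral_sum_trinomialX u0 subr0 umbral_shift2 umbral_diff -raddfD.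
by congr umbral; rewrite [T ^+ c.+1]exprS /trinomial; ring.
Qed.

Lemma umbral_up_step e :
  umbral h (T ^+ e * 'X) =
    umbral g (T ^+ e.+1) + umbral g (T ^+ e * 'X) +
    \sum_(j < e.+1) umbral g (T ^+ j * 'X).
Proof.
rewrite umbral_sum_trinomialX u0 subr0 umbral_shift2 !umbral_diff -!raddfD.
by congr umbral; rewrite [T ^+ e.+1]exprS /trinomial; ring.
Qed.

End UmbralRecurrence.

Lemma big_iota_rev (R : nmodType) (F : nat -> R) s n :
  \sum_(x <- iota s n) F (s + n - x.+1)%N = \sum_(j < n) F j.
Proof.
elim: n s => [|n IH] s; first by rewrite big_nil big_ord0.
by rewrite big_cons big_ord_recr -addSnnS IH addKn addrC.
Qed.

Fixpoint ballot (n z : nat) : int :=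
  if n is n'.+1 then \sum_(i < z.+2) ballot n' i else 1.

Section BallotSteps.

Variable n : nat.

Let partial_sum z := \sum_(i < z) ballot n i.

Let partial_sum0 : partial_sum 0 = 0.
Proof. exact: big_ord0. Qed.

Let ballot_diff i : ballot n i = partial_sum i.+1 - partial_sum i.
Proof. by rewrite /partial_sum big_ord_recr /= addrAC subrr add0r. Qed.

Lemma ballot_down_step c :
  umbral (ballot n.+1) (T ^+ c) =
    umbral (ballot n) (T ^+ c) + \sum_(j < c.+1) umbral (ballot n) (T ^+ j * 'X).
Proof. exact: umbral_down_step partial_sum0 ballot_diff (fun=> erefl) c. Qed.

Lemma ballot_up_step e :
  umbral (ballot n.+1) (T ^+ e * 'X) =
    umbral (ballot n) (T ^+ e.+1) + umbral (ballot n) (T ^+ e * 'X) +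
    \sum_(j < e.+1) umbral (ballot n) (T ^+ j * 'X).
Proof. exact: umbral_up_step partial_sum0 ballot_diff (fun=> erefl) e. Qed.

End BallotSteps.

Definition down_count_formula k := forall m a, (m.-1 <= a)%N ->
  (ras_count k m a m.-1)%:Z = umbral (ballot k) (T ^+ (a - m.-1)).

Definition up_count_formula k := forall m a, (0 < m <= a)%N ->
  (ras_count k m a m)%:Z = umbral (ballot k) (T ^+ (a - m) * 'X).

Lemma ras_count_new_max k a s n :
  up_count_formula k -> (0 < s)%N -> (s + n = a.+2)%N ->
  (\sum_(x <- iota s n) ras_count k x a.+1 x)%:Z =
    \sum_(j < n) umbral (ballot k) (T ^+ j * 'X).
Proof.
move=> up_formula s_gt0 s_n.
rewrite raddf_sum -(big_iota_rev _ (fun j => umbral (ballot k) (T ^+ j * 'X)) s).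
apply: eq_big_seq => x; rewrite mem_iota => /andP[le_sx lt_x].
by rewrite /= up_formula; [congr (umbral _ (T ^+ _ * _)); lia | lia].
Qed.

Lemma ras_count_down_step k :
  down_count_formula k -> up_count_formula k -> down_count_formula k.+1.
Proof.
move=> down_formula up_formula m a le_ma.
(* The choice m.-1 keeps the state; every larger x is a new maximum. *)
rewrite ras_countS (_ : a.+2 - m.-1 = (a - m.-1).+2)%N; last by lia.
rewrite iotaS big_cons PoszD ballot_down_step ltnn addn0.
rewrite (_ : maxn m m.-1 = m); last by lia.
rewrite down_formula //; congr (_ + _).
rewrite (eq_big_seq (fun x => ras_count k x a.+1 x)) => [|x]; last first.
  by rewrite mem_iota => /andP[lt_x _]; rewrite lt_x addn1 (_ : maxn m x = x) //; lia.
by apply: ras_count_new_max => //; lia.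
Qed.

Lemma ras_count_up_step k :
  down_count_formula k -> up_count_formula k -> up_count_formula k.+1.
Proof.
move=> down_formula up_formula [//|m] a /andP[_ le_ma].
(* The choice m leads to a down state, m.+1 keeps the state, and every larger
   x is a new maximum. *)
rewrite ras_countS [m.+1.-1]/= (_ : a.+2 - m = (a - m.+1).+3)%N; last by lia.
rewrite iotaS big_cons iotaS big_cons !PoszD ballot_up_step.
have max_m : maxn m.+1 m = m.+1 by lia.
have not_lt : (m.+1 < m)%N = false by lia.
rewrite maxnn ltnn max_m not_lt !addn0 down_formula ?up_formula; [|lia|lia].
rewrite [m.+1.-1]/= (_ : a - m = (a - m.+1).+1)%N; last by lia.
rewrite -addrA; congr (_ + (_ + _)).
rewrite (eq_big_seq (fun x => ras_count k x a.+1 x)) => [|x]; last first.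
  by rewrite mem_iota => /andP[lt_x _]; rewrite lt_x addn1 (_ : maxn m.+1 x = x) //; lia.
by apply: ras_count_new_max => //; lia.
Qed.

Lemma ras_count_closed k : down_count_formula k /\ up_count_formula k.
Proof.
elim: k => [|k [down_formula up_formula]].
  by split=> m a _;
    rewrite umbral_const1 ?hornerM ?hornerX horner_exp trinomial_at1 expr1n ?mul1r.
split; [exact: ras_count_down_step | exact: ras_count_up_step].
Qed.

Lemma ballotSS n z : ballot n.+1 z.+1 = ballot n.+1 z + ballot n z.+2.
Proof. exact: big_ord_recr. Qed.

Lemma ballotS0 n : ballot n.+1 0 = ballot n 0 + ballot n 1.
Proof. by rewrite /= big_ord_recr big_ord1. Qed.

Lemma ballot_closed n z :
  ballot n.+1 z = ('C(n.*2 + z.+3, n.+1))%:Z - ('C(n.*2 + z.+3, n))%:Z.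
Proof.
elim: n z => [|n IH] z.
  by rewrite /= sumr_const card_ord bin1 bin0 -natz; lia.
elim: z => [|z IHz].
  rewrite ballotS0 !IH doubleS !addnS !addn0.
  have := binS (n.*2).+4 n.+1; have := binS (n.*2).+4 n.
  have := binS (n.*2).+3 n.+1; have := binS (n.*2).+3 n.
  have : 'C((n.*2).+3, n.+2) = 'C((n.*2).+3, n.+1).
    by rewrite -bin_sub; [congr binomial|]; lia.
  lia.
rewrite ballotSS IHz IH doubleS !addnS !addSn.
have := binS (n.*2 + z).+1.+4 n.+1; have := binS (n.*2 + z).+1.+4 n.
lia.
Qed.

Lemma ballot_catalan n : ballot n 0 = (catalan n.+1)%:Z.
Proof.
case: n => [//|n].
rewrite ballot_closed /catalan doubleS !addnS addn0.
set N := (n.*2).+3.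
have N_n : (N - n = n.+3)%N by rewrite /N; lia.
have sym : 'C(N, n.+2) = 'C(N, n.+1) by rewrite -bin_sub /N; [congr binomial|]; lia.
have := binS N n.+1; have := mul_bin_left N n; rewrite N_n sym => left_bin pascal.
have le_bin : ('C(N, n) <= 'C(N, n.+1))%N by nia.
have -> : 'C(N.+1, n.+2) = (n.+3 * ('C(N, n.+1) - 'C(N, n)))%N by rewrite mulnBr; nia.
by rewrite mulKn //; lia.
Qed.

Lemma size_ras_ext0 n : (size (ras_ext [:: 0%N] n))%:Z = ballot n 0.
Proof.
rewrite size_ras_ext (_ : ras_max [:: 0%N] = 0%N) ?(ras_count_closed n).1 //.
  by rewrite expr0 umbral1.
by rewrite /ras_max big_seq1.
Qed.

Theorem theorem10 (n : nat) :
  exists L : seq (seq nat),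
    [/\ uniq L,
        forall s : seq nat, (s \in L) = is_ras s && (size s == n)
      & size L = catalan n].
Proof.
case: n => [|n].
  by exists [:: [::]]; split=> // -[|x s]; rewrite ?andbF.
exists (ras_ext [:: 0%N] n); split; first exact: uniq_ras_ext.
  exact: mem_ras_ext0.
by apply/eqP; rewrite -eqz_nat size_ras_ext0 ballot_catalan.
Qed.
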